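(* Work on $\mathbb{C}^3$ with coordinates $X=(z,w^{\dot 1},w^{\dot 2})$, and let the ''defect'' be the complex line $\{w^{\dot 1}=w^{\dot 2}=0\}$, whose points are written $Y=(z_Y,0,0)$. For $X$ a bulk point and $Y$ a defect point, define the $(0,2)$-form $$\bar\omega_{XY}=(\bar z-\bar z_{Y})\,[d\bar w\wedge d\bar w]-2\,d(\bar z-\bar z_{Y})\wedge[\bar w\, d\bar w],$$ and the bulk-to-defect propagator $$\mathcal{K}(X,Y)=-\frac{\bar\omega_{XY}}{\pi^3\big(|z-z_Y|^2+|w^{\dot 1}|^2+|w^{\dot 2}|^2\big)^3}.$$ Then for any two defect points $Y_1=(z_1,0,0)$ and $Y_2=(z_2,0,0)$ (with $z_1,z_2$ treated either as fixed or as additional complex variables), the wedge product satisfies $$\mathcal{K}(X,Y_1)\wedge\mathcal{K}(X,Y_2)=0$$ wherever it is defined. Consequently, any bulk/defect Feynman diagram whose integrand contains two bulk-to-defect propagators attached to the same bulk vertex $X$ and ending on the defect (i.e. forming a triangle with the defect) vanishes.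
   Context: Spinor brackets: for two-component objects $a^{\dot\alpha},b^{\dot\alpha}$, $[a\,b]=a^{\dot\alpha}b_{\dot\alpha}$ with indices lowered by $w_{\dot\alpha}=w^{\dot\beta}\epsilon_{\dot\beta\dot\alpha}$, where $\epsilon$ is antisymmetric with $\epsilon^{\dot 1\dot 2}=1$; thus $[d\bar w\wedge d\bar w]$ is a nonzero multiple of $d\bar w^{\dot 1}\wedge d\bar w^{\dot 2}$ and $[\bar w\,d\bar w]$ is a multiple of $\bar w^{\dot 1}d\bar w^{\dot 2}-\bar w^{\dot 2}d\bar w^{\dot 1}$. The propagator $\mathcal{K}$ is the limit of the regularized propagator of the $(0,1)$-form gauge field of holomorphic Chern–Simons/BF type theories on twistor space in the gauge $\bar\partial^\dagger\mathsf{A}=0$, with one endpoint placed on the defect; diagrams are integrals of wedge products of such propagators, vertices and external fields over bulk and defect points. *)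

From HB Require Import structures.
From mathcomp Require Import all_boot all_order all_algebra.
From mathcomp Require Import reals trigo.
From mathcomp Require Import complex.
Set Implicit Arguments. Unset Strict Implicit. Unset Printing Implicit Defensive.
Import Order.TTheory GRing.Theory Num.Theory.
Local Open Scope ring_scope.
Local Open Scope complex_scope.

(* Antiholomorphic differential forms at a point, with values in C, on the
   5 generators  0 = dzbar, 1 = dwbar^1, 2 = dwbar^2, 3 = dzbar_1, 4 = dzbar_2
   (the last two are the differentials of the defect coordinates z_1, z_2 when
   these are treated as additional variables).  A form is the family of its
   coefficients on the basis monomials e_S = e_{s_1} /\ ... /\ e_{s_k}
   (s_1 < ... < s_k). *)
Definition form (C : nzRingType) := {ffun {set 'I_5} -> C}.

(* number of inversions needed to sort e_S /\ e_T into e_{S u T} *)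
Definition inv_count (S T : {set 'I_5}) : nat :=
  #|[set p : 'I_5 * 'I_5 | [&& p.1 \in S, p.2 \in T & (p.2 < p.1)%N]]|.

Definition wedge (C : nzRingType) (a b : form C) : form C :=
  [ffun U : {set 'I_5} => \sum_(S : {set 'I_5}) \sum_(T : {set 'I_5} |
     [disjoint S & T] && (S :|: T == U)) (-1) ^+ inv_count S T * a S * b T].

Definition cst (C : nzRingType) (c : C) : form C :=
  [ffun S : {set 'I_5} => if S == set0 then c else 0].

Definition gen (C : nzRingType) (i : 'I_5) : form C :=
  [ffun S : {set 'I_5} => if S == [set i] then 1 else 0].

(* Spinor bracket [a b] = a^{a} b_{a},  b_{a} = b^{c} eps_{c a}, eps^{12} = 1,
   i.e. b_1 = - b^2, b_2 = b^1;  products are wedge products. *)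
Definition bracket (C : nzRingType) (a1 a2 b1 b2 : form C) : form C :=
  wedge a1 (- b2) + wedge a2 b1.

Definition i0 : 'I_5 := @Ordinal 5 0 isT.
Definition i1 : 'I_5 := @Ordinal 5 1 isT.
Definition i2 : 'I_5 := @Ordinal 5 2 isT.
Definition i3 : 'I_5 := @Ordinal 5 3 isT.
Definition i4 : 'I_5 := @Ordinal 5 4 isT.

(* omega_{XY} = (zb - zb_Y)[dwb /\ dwb] - 2 d(zb - zb_Y) /\ [wb dwb],
   X = (z, w1, w2), Y = (zY,0,0), dzY = the differential of zbar_Y
   (0 if zY is fixed). *)
Definition omegaXY (R : realType) (z w1 w2 zY : R[i]) (dzY : form R[i])
  : form R[i] :=
  wedge (cst (z^* - zY^*)%C) (bracket (gen _ i1) (gen _ i2) (gen _ i1) (gen _ i2))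
  - 2%:R *: wedge (gen _ i0 - dzY)
              (bracket (cst (w1^*)%C) (cst (w2^*)%C) (gen _ i1) (gen _ i2)).

Definition distsq (R : realType) (z w1 w2 zY : R[i]) : R[i] :=
  `|z - zY| ^+ 2 + `|w1| ^+ 2 + `|w2| ^+ 2.

Definition propK (R : realType) (z w1 w2 zY : R[i]) (dzY : form R[i])
  : form R[i] :=
  - ((((pi : R)%:C) ^+ 3 * distsq z w1 w2 zY ^+ 3)^-1) *: omegaXY z w1 w2 zY dzY.

Definition dzdef (R : realType) (vary : bool) (i : 'I_5) : form R[i] :=
  if vary then gen _ i else 0.

(* Up to the factor -2, omega_XY = c_Y dwb^1/\dwb^2 + d(zb - zb_Y) /\ alpha,
   where alpha = [wb dwb] is a 1-form in the span of dwb^1, dwb^2 that does not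
   depend on the defect point Y.  Since dwb^1/\dwb^2 /\ alpha = 0 and
   alpha /\ alpha = 0, graded commutativity and associativity of the wedge
   product make each of the four terms of omega_XY1 /\ omega_XY2 vanish. *)

From Pilot Require Import Defs.
From HB Require Import structures.
From mathcomp Require Import all_boot all_order all_algebra.
From mathcomp Require Import reals trigo complex.
From mathcomp Require Import ring.
Import Order.TTheory GRing.Theory Num.Theory.
Local Open Scope ring_scope.

Implicit Types S T V U : {set 'I_5}.

Lemma disjointsU S T V :
  [disjoint S :|: T & V] = [disjoint S & V] && [disjoint T & V].
Proof. by rewrite -!setI_eq0 setIUl setU_eq0. Qed.

Lemma sum_setU (F : 'I_5 -> nat) S T : [disjoint S & T] ->
  (\sum_(x in S :|: T) F x = \sum_(x in S) F x + \sum_(x in T) F x)%N.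
Proof.
by move=> dST; rewrite -bigU //; apply: eq_bigl => x; rewrite in_setU.
Qed.

Lemma inv_countE S T :
  inv_count S T = (\sum_(x in S) \sum_(y in T) (y < x))%N.
Proof.
rewrite /inv_count -sum1dep_card pair_big_dep /= big_mkcond [RHS]big_mkcond /=.
by apply: eq_bigr => -[x y] _ /=; case: (x \in S); case: (y \in T).
Qed.

Lemma inv_countUl S T V : [disjoint S & T] ->
  inv_count (S :|: T) V = (inv_count S V + inv_count T V)%N.
Proof. by move=> dST; rewrite !inv_countE sum_setU. Qed.

Lemma inv_countUr S T V : [disjoint T & V] ->
  inv_count S (T :|: V) = (inv_count S T + inv_count S V)%N.
Proof.
move=> dTV; rewrite !inv_countE -big_split.
by apply: eq_bigr => x _; rewrite sum_setU.
Qed.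

Lemma inv_count_sym S T : [disjoint S & T] ->
  (inv_count S T + inv_count T S = #|S| * #|T|)%N.
Proof.
move=> dST; rewrite !inv_countE [X in (_ + X)%N]exchange_big -big_split /=.
rewrite -sum_nat_const; apply: eq_bigr => x xS; rewrite -big_split -sum1_card.
apply: eq_bigr => y yT /=; have := disjointFr dST xS.
by case: ltngtP => // /val_inj <-; rewrite yT.
Qed.

Section Exterior.
Variable R : realType.
Local Notation C := R[i].
Implicit Types (a b c : Defs.form C) (k : C).

Lemma formZE k a U : (k *: a) U = k * a U.
Proof. by rewrite ffunE. Qed.

Definition wedge_coef S T U : C :=
  if [disjoint S & T] && (S :|: T == U) then (-1) ^+ inv_count S T else 0.

Lemma wedgeE a b U :
  wedge a b U = \sum_S \sum_T wedge_coef S T U * a S * b T.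
Proof.
rewrite ffunE; apply: eq_bigr => S _; rewrite big_mkcond; apply: eq_bigr => T _.
by rewrite /wedge_coef; case: ifP; rewrite ?mul0r.
Qed.

Lemma wedgeDl a b c : wedge (a + b) c = wedge a c + wedge b c.
Proof.
apply/ffunP => U; rewrite [RHS]ffunE !wedgeE -big_split; apply: eq_bigr => S _.
by rewrite -big_split; apply: eq_bigr => T _; rewrite ffunE mulrDr mulrDl.
Qed.

Lemma wedgeDr a b c : wedge a (b + c) = wedge a b + wedge a c.
Proof.
apply/ffunP => U; rewrite [RHS]ffunE !wedgeE -big_split; apply: eq_bigr => S _.
by rewrite -big_split; apply: eq_bigr => T _; rewrite ffunE mulrDr.
Qed.

Lemma wedgeZl k a b : wedge (k *: a) b = k *: wedge a b.
Proof.
apply/ffunP => U; rewrite formZE !wedgeE mulr_sumr; apply: eq_bigr => S _.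
by rewrite mulr_sumr; apply: eq_bigr => T _; rewrite formZE; ring.
Qed.

Lemma wedgeZr k a b : wedge a (k *: b) = k *: wedge a b.
Proof.
apply/ffunP => U; rewrite formZE !wedgeE mulr_sumr; apply: eq_bigr => S _.
by rewrite mulr_sumr; apply: eq_bigr => T _; rewrite formZE; ring.
Qed.

Lemma wedgeNl a b : wedge (- a) b = - wedge a b.
Proof. by rewrite -scaleN1r wedgeZl scaleN1r. Qed.

Lemma wedgeNr a b : wedge a (- b) = - wedge a b.
Proof. by rewrite -scaleN1r wedgeZr scaleN1r. Qed.

Lemma wedgeBl a b c : wedge (a - b) c = wedge a c - wedge b c.
Proof. by rewrite wedgeDl wedgeNl. Qed.

Lemma wedgeBr a b c : wedge a (b - c) = wedge a b - wedge a c.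
Proof. by rewrite wedgeDr wedgeNr. Qed.

Lemma wedge0l a : wedge 0 a = 0.
Proof. by rewrite -[0 in LHS](scale0r 0) wedgeZl scale0r. Qed.

Lemma wedge0r a : wedge a 0 = 0.
Proof. by rewrite -[0 in LHS](scale0r 0) wedgeZr scale0r. Qed.

Lemma sum_wedge_coef S T (F : {set 'I_5} -> C) :
  \sum_U wedge_coef S T U * F U = wedge_coef S T (S :|: T) * F (S :|: T).
Proof.
rewrite (bigD1 (S :|: T)) //= big1 ?addr0 // => U /negbTE nU.
by rewrite /wedge_coef eq_sym nU andbF mul0r.
Qed.

Lemma wedge_coefA S T V U :
  wedge_coef S T (S :|: T) * wedge_coef (S :|: T) V U =
  wedge_coef T V (T :|: V) * wedge_coef S (T :|: V) U.
Proof.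
rewrite /wedge_coef !eqxx !andbT setUA disjointsU.
rewrite [[disjoint S & T :|: V]]disjoint_sym disjointsU.
rewrite ![[disjoint _ & S]]disjoint_sym.
have [dST|_] := boolP [disjoint S & T]; last by rewrite /= mul0r mulr0.
have [dSV|_] := boolP [disjoint S & V]; last by rewrite /= !mulr0.
have [dTV|_] := boolP [disjoint T & V]; last by rewrite andbF /= mulr0 mul0r.
case: (_ == U); rewrite /= ?mulr0 // -!exprD inv_countUl // inv_countUr //.
by rewrite addnA addnC.
Qed.

Lemma sum_mul_wedge (F : {set 'I_5} -> C) a b :
  \sum_U F U * wedge a b U =
  \sum_S \sum_T wedge_coef S T (S :|: T) * F (S :|: T) * a S * b T.
Proof.
under eq_bigr do rewrite wedgeE mulr_sumr; rewrite exchange_big.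
apply: eq_bigr => S _; under eq_bigr do rewrite mulr_sumr.
rewrite exchange_big; apply: eq_bigr => T _.
under eq_bigr do rewrite mulrC -!mulrA.
by rewrite sum_wedge_coef [b T * _]mulrC (mulrCA (a S)) !mulrA.
Qed.

Lemma wedgeA a b c : wedge (wedge a b) c = wedge a (wedge b c).
Proof.
apply/ffunP => U; rewrite !wedgeE exchange_big /=.
under eq_bigr do rewrite -mulr_suml sum_mul_wedge mulr_suml.
under [RHS]eq_bigr do under eq_bigr do rewrite -mulrA mulrCA.
under [RHS]eq_bigr do rewrite -mulr_sumr sum_mul_wedge mulr_sumr.
rewrite exchange_big; apply: eq_bigr => S _.
under eq_bigr do rewrite mulr_suml; rewrite exchange_big.
apply: eq_bigr => T _; rewrite mulr_sumr; apply: eq_bigr => V _.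
by rewrite wedge_coefA; ring.
Qed.

Lemma wedge_coefC S T U :
  wedge_coef S T U = (-1) ^+ (#|S| * #|T|) * wedge_coef T S U.
Proof.
rewrite /wedge_coef disjoint_sym setUC.
case: ifP => [/andP[dTS _]|_]; last by rewrite mulr0.
rewrite mulnC -(inv_count_sym _ _ dTS) addnC exprD -mulrA -exprD addnn -muln2.
by rewrite exprM sqrr_sign mulr1.
Qed.

Definition homogeneous p a := forall S, #|S| != p -> a S = 0.

Lemma homogeneous_gen i : homogeneous 1 (gen C i).
Proof.
by move=> S; rewrite ffunE; case: (S =P [set i]) => // ->; rewrite cards1.
Qed.

Lemma homogeneousB p a b :
  homogeneous p a -> homogeneous p b -> homogeneous p (a - b).
Proof. by move=> ha hb S hS; rewrite !ffunE ha ?hb ?subr0. Qed.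

Lemma homogeneousZ p k a : homogeneous p a -> homogeneous p (k *: a).
Proof. by move=> ha S hS; rewrite formZE ha ?mulr0. Qed.

Lemma homogeneous_wedge p q a b :
  homogeneous p a -> homogeneous q b -> homogeneous (p + q) (wedge a b).
Proof.
move=> ha hb U hU; rewrite wedgeE big1 // => S _; rewrite big1 // => T _.
rewrite /wedge_coef; case: ifP => [|_]; last by rewrite !mul0r.
case/andP => dST /eqP eU.
have [hS|/negbNE/eqP hS] := boolP (#|S| != p).
  by rewrite ha ?(mulr0, mul0r).
have [hT|/negbNE/eqP hT] := boolP (#|T| != q); first by rewrite hb ?mulr0.
by move: hU; rewrite -eU cardsU (disjoint_setI0 dST) cards0 subn0 hS hT eqxx.
Qed.

Lemma wedgeC_homogeneous {p q a b} : homogeneous p a -> homogeneous q b ->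
  wedge a b = (-1) ^+ (p * q) *: wedge b a.
Proof.
move=> ha hb; apply/ffunP => U; rewrite formZE !wedgeE exchange_big mulr_sumr.
apply: eq_bigr => T _; rewrite mulr_sumr; apply: eq_bigr => S _.
have [hS|/negbNE/eqP <-] := boolP (#|S| != p).
  by rewrite ha ?(mulr0, mul0r).
have [hT|/negbNE/eqP <-] := boolP (#|T| != q).
  by rewrite hb ?(mulr0, mul0r).
by rewrite wedge_coefC; ring.
Qed.

Lemma wedge_cstl k a : wedge (cst k) a = k *: a.
Proof.
apply/ffunP => U; rewrite formZE wedgeE (bigD1 set0) //= [X in _ + X]big1.
  rewrite addr0 (bigD1 U) //= [X in _ + X]big1 => [|T nT].
    rewrite addr0 /wedge_coef -setI_eq0 set0I set0U !eqxx inv_countE big_set0.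
    by rewrite ffunE eqxx mul1r.
  by rewrite /wedge_coef set0U (negbTE nT) andbF !mul0r.
by move=> S nS; apply: big1 => T _; rewrite ffunE (negbTE nS) mulr0 mul0r.
Qed.

Lemma wedge_gen_id i : wedge (gen C i) (gen C i) = 0.
Proof.
apply/ffunP => U; rewrite wedgeE ffunE big1 // => S _; rewrite big1 // => T _.
rewrite /wedge_coef !ffunE.
case: (S =P [set i]) => [->|]; last by rewrite !mulr0 mul0r.
case: (T =P [set i]) => [->|]; last by rewrite mulr0.
by rewrite disjoints1 set11 !mul0r.
Qed.

Lemma wedge_genC i j : wedge (gen C i) (gen C j) = - wedge (gen C j) (gen C i).
Proof.
rewrite (wedgeC_homogeneous (homogeneous_gen i) (homogeneous_gen j)).
by rewrite scaleN1r.
Qed.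

Lemma wedge_gen2_genl i j : wedge (wedge (gen C i) (gen C j)) (gen C i) = 0.
Proof.
by rewrite wedgeA wedge_genC wedgeNr -wedgeA wedge_gen_id wedge0l oppr0.
Qed.

Lemma wedge_gen2_genr i j : wedge (wedge (gen C i) (gen C j)) (gen C j) = 0.
Proof. by rewrite wedgeA wedge_gen_id wedge0r. Qed.

Section SpanOfTwoGenerators.
Variables (i j : 'I_5) (x y : C).
Let E := wedge (gen C i) (gen C j).
Let alpha := x *: gen C i - y *: gen C j.

Let homogeneousE : homogeneous 2 E.
Proof. exact: homogeneous_wedge (homogeneous_gen i) (homogeneous_gen j). Qed.

Let homogeneous_alpha : homogeneous 1 alpha.
Proof. by apply: homogeneousB; apply: homogeneousZ; apply: homogeneous_gen. Qed.

Lemma wedge_gen2_span : wedge E alpha = 0.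
Proof.
by rewrite wedgeBr !wedgeZr wedge_gen2_genl wedge_gen2_genr !scaler0 subr0.
Qed.

Lemma wedge_span_id : wedge alpha alpha = 0.
Proof.
rewrite wedgeBl !wedgeBr !wedgeZl !wedgeZr !wedge_gen_id (wedge_genC j i).
by rewrite !scaler0 sub0r subr0 !scalerN !scalerA mulrC opprK addNr.
Qed.

Lemma wedge_span_pair_eq0 k1 k2 a1 a2 : homogeneous 1 a1 -> homogeneous 1 a2 ->
  wedge (k1 *: E + wedge a1 alpha) (k2 *: E + wedge a2 alpha) = 0.
Proof.
move=> ha1 ha2.
have EE : wedge E E = 0 by rewrite {2}/E -wedgeA wedge_gen2_genl wedge0l.
have alphaE : wedge alpha E = 0.
  rewrite (wedgeC_homogeneous homogeneous_alpha homogeneousE).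
  by rewrite wedge_gen2_span scaler0.
have E_a2alpha : wedge E (wedge a2 alpha) = 0.
  rewrite -wedgeA (wedgeC_homogeneous homogeneousE ha2) -signr_odd scale1r.
  by rewrite wedgeA wedge_gen2_span wedge0r.
have a1alpha_E : wedge (wedge a1 alpha) E = 0 by rewrite wedgeA alphaE wedge0r.
have a1alpha_a2alpha : wedge (wedge a1 alpha) (wedge a2 alpha) = 0.
  rewrite wedgeA -(wedgeA alpha) (wedgeC_homogeneous homogeneous_alpha ha2).
  by rewrite scaleN1r wedgeNl wedgeA wedge_span_id wedge0r oppr0 wedge0r.
rewrite wedgeDl (wedgeDr (k1 *: E)) (wedgeDr (wedge a1 alpha)).
rewrite !wedgeZl !wedgeZr EE E_a2alpha a1alpha_E a1alpha_a2alpha.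
by rewrite !scaler0 !addr0.
Qed.

End SpanOfTwoGenerators.

Lemma bracket_gen i j : bracket (gen C i) (gen C j) (gen C i) (gen C j) =
  - 2%:R *: wedge (gen C i) (gen C j).
Proof.
by rewrite /bracket wedgeNr (wedge_genC j i) -opprD scaleNr scaler_nat mulr2n.
Qed.

Lemma bracket_cst_gen x1 x2 i j :
  bracket (cst x1) (cst x2) (gen C i) (gen C j) = x2 *: gen C i - x1 *: gen C j.
Proof. by rewrite /bracket wedgeNr !wedge_cstl addrC. Qed.

Lemma homogeneous_dzbar_sub vary i : homogeneous 1 (gen C i0 - dzdef R vary i).
Proof.
apply: homogeneousB; first exact: homogeneous_gen.
by case: vary; [exact: homogeneous_gen | move=> S _; rewrite ffunE].
Qed.

Lemma omegaXYE z w1 w2 zY dzY : omegaXY z w1 w2 zY dzY =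
  - 2%:R *: ((z^* - zY^*)%C *: wedge (gen C i1) (gen C i2) +
             wedge (gen C i0 - dzY) (w2^*%C *: gen C i1 - w1^*%C *: gen C i2)).
Proof.
rewrite /omegaXY bracket_gen bracket_cst_gen wedge_cstl scalerDr !scalerA.
by rewrite mulrC scaleNr.
Qed.

End Exterior.

Theorem lemma1 (R : realType) (z w1 w2 z1 z2 : R[i]) (vary1 vary2 : bool) :
  distsq z w1 w2 z1 != 0 -> distsq z w1 w2 z2 != 0 ->
  wedge (propK z w1 w2 z1 (dzdef R vary1 i3))
        (propK z w1 w2 z2 (dzdef R vary2 i4)) = 0.
Proof.
move=> _ _; rewrite /propK wedgeZl wedgeZr !omegaXYE wedgeZl wedgeZr.
by rewrite wedge_span_pair_eq0 ?scaler0 //; apply: homogeneous_dzbar_sub.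
Qed.
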